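(* Let $R$ be any unital ring, let $\mathcal{F}$ be any Gabriel filter of right ideals of $R$, and let $\Delta=\{\delta_n\}_{n\in\omega}$ be any higher derivation on $R$. Then for every $I\in\mathcal{F}$ and every $n\in\omega$ there is $J\in\mathcal{F}$ with $\delta_i(J)\subseteq I$ for all $i\le n$. (That is, every Gabriel filter is higher differential; equivalently every hereditary torsion theory is higher differential.)
   Context: For a right ideal $I$ and $r\in R$, write $(r:I)=\{s\in R\mid rs\in I\}$. A Gabriel filter on $R$ is a nonempty collection $\mathcal{F}$ of right ideals of $R$ such that (1) if $I\in\mathcal{F}$ and $r\in R$ then $(r:I)\in\mathcal{F}$; (2) if $I\in\mathcal{F}$ and $J$ is a right ideal with $(r:J)\in\mathcal{F}$ for all $r\in I$, then $J\in\mathcal{F}$. Gabriel filters correspond bijectively to hereditary torsion theories on right $R$-modules. A higher derivation on $R$ is a family $\{\delta_n\}_{n\in\omega}$ of additive maps $R\to R$ with $\delta_0=\mathrm{id}_R$ and $\delta_n(rs)=\sum_{i=0}^n\delta_i(r)\delta_{n-i}(s)$ for all $n$ and all $r,s\in R$. *)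

From HB Require Import structures.
From mathcomp Require Import all_boot all_algebra.
Set Implicit Arguments. Unset Strict Implicit. Unset Printing Implicit Defensive.
Import GRing.Theory.
Local Open Scope ring_scope.

Definition is_right_ideal (R : pzRingType) (I : R -> Prop) : Prop :=
  [/\ I 0,
      (forall x y, I x -> I y -> I (x - y)) &
      (forall x r, I x -> I (x * r))].

Definition colon (R : pzRingType) (r : R) (I : R -> Prop) : R -> Prop :=
  fun s => I (r * s).

Definition gabriel_filter (R : pzRingType) (F : (R -> Prop) -> Prop) : Prop :=
  [/\ (exists I, F I),
      (forall I, F I -> is_right_ideal I),
      (forall I r, F I -> F (colon r I)) &
      (forall I J, F I -> is_right_ideal J ->
         (forall r, I r -> F (colon r J)) -> F J)].

Definition higher_derivation (R : pzRingType) (delta : nat -> R -> R) : Prop :=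
  [/\ (forall n x y, delta n (x + y) = delta n x + delta n y),
      (forall x, delta 0%N x = x) &
      (forall n r s, delta n (r * s) =
         \sum_(i < n.+1) delta i r * delta (n - i)%N s)].

From mathcomp Require Import all_boot all_algebra.
From Stdlib Require Import FunctionalExtensionality PropExtensionality.
Set Implicit Arguments. Unset Strict Implicit.
Import GRing.Theory.
Local Open Scope ring_scope.

(* Let [M_n(I)] be the set of [x] with [delta_i x \in I] for all [i <= n]; it is a
   right ideal, and we show [M_n(I) \in F] by induction on [n], for all [I \in F]
   at once.  For [r \in I], the Leibniz rule
   [delta_i (r s) = r delta_i s + \sum_(1 <= j <= i) delta_j r delta_(i-j) s]
   shows that [(r : M_(n+1)(I))] contains [M_n(C)], where
   [C = \bigcap_(j <= n+1) (delta_j r : I)] lies in [F].  Axiom (2) of Gabriel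
   filters then gives [M_(n+1)(I) \in F]. *)

Section RightIdeal.
Variables (R : pzRingType) (I : R -> Prop).
Hypothesis rI : is_right_ideal I.

Lemma right_idealD x y : I x -> I y -> I (x + y).
Proof.
have [I0 IB _] := rI => Ix Iy.
by have := IB x (0 - y) Ix (IB 0 y I0 Iy); rewrite sub0r opprK.
Qed.

Lemma right_ideal_sum m (f : 'I_m -> R) : (forall j, I (f j)) -> I (\sum_(j < m) f j).
Proof.
move=> If; apply: (big_ind I) => //; first by case: rI.
exact: right_idealD.
Qed.

Lemma right_ideal_colon r : is_right_ideal (colon r I).
Proof.
have [I0 IB IM] := rI; split; rewrite /colon.
- by rewrite mulr0.
- by move=> x y Ix Iy; rewrite mulrBr; apply: IB.
- by move=> x s Ix; rewrite mulrA; apply: IM.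
Qed.

Lemma right_idealI (J : R -> Prop) : is_right_ideal J ->
  is_right_ideal (fun x => I x /\ J x).
Proof.
have [I0 IB IM] := rI => -[J0 JB JM]; split => //.
- by move=> x y [? ?] [? ?]; split; [apply: IB | apply: JB].
- by move=> x r [? ?]; split; [apply: IM | apply: JM].
Qed.

End RightIdeal.

Section GabrielFilter.
Variables (R : pzRingType) (F : (R -> Prop) -> Prop).
Hypothesis gF : gabriel_filter F.

Lemma gabriel_ideal I : F I -> is_right_ideal I.
Proof. by case: gF => _ + _ _; apply. Qed.

Lemma gabriel_colon r I : F I -> F (colon r I).
Proof. by case: gF => _ _ + _; apply. Qed.

Lemma gabriel_ext (A B : R -> Prop) : F A -> (forall x, A x <-> B x) -> F B.
Proof.
move=> FA AB; suff <- : A = B by [].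
by apply: functional_extensionality => x; apply: propositional_extensionality.
Qed.

Lemma gabriel_full : F (fun _ => True).
Proof.
have [[I FI] _ _ _] := gF; have [I0 _ _] := gabriel_ideal FI.
by apply: gabriel_ext (gabriel_colon 0 FI) _ => s; rewrite /colon mul0r.
Qed.

Lemma gabriel_sup (A B : R -> Prop) :
  F A -> is_right_ideal B -> (forall x, A x -> B x) -> F B.
Proof.
case: gF => _ _ _ gF2 FA rB AB; apply: (gF2 A) => // r Ar.
have [_ _ AM] := gabriel_ideal FA.
by apply: gabriel_ext gabriel_full _ => s; split => // _; apply/AB/AM.
Qed.

Lemma gabrielI (A B : R -> Prop) : F A -> F B -> F (fun x => A x /\ B x).
Proof.
case: gF => _ _ _ gF2 FA FB; have rA := gabriel_ideal FA.
have rAB := right_idealI rA (gabriel_ideal FB).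
apply: (gF2 A) => // r Ar.
apply: (gabriel_sup (gabriel_colon r FB)); first exact: right_ideal_colon.
by have [_ _ AM] := rA => s Brs; split => //; apply: AM.
Qed.

Lemma gabriel_bigcap m (A : nat -> R -> Prop) :
  (forall j, (j <= m)%N -> F (A j)) -> F (fun x => forall j, (j <= m)%N -> A j x).
Proof.
elim: m => [|m IHm] FA.
  by apply: gabriel_ext (FA 0%N isT) _ => x; split=> [Ax j | /(_ 0%N isT)//];
    rewrite leqn0 => /eqP->.
apply: gabriel_ext (gabrielI (IHm _) (FA m.+1 (leqnn _))) _.
  by move=> j /leqW; apply: FA.
move=> x; split=> [[Ax Amx] j | Ax]; last by split=> [j /leqW|]; apply: Ax.
by rewrite leq_eqVlt ltnS => /predU1P[-> // | /Ax].
Qed.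

End GabrielFilter.

Section HigherDerivation.
Variables (R : pzRingType) (delta : nat -> R -> R).
Hypothesis hD : higher_derivation delta.

Lemma hder_id x : delta 0%N x = x.
Proof. by case: hD => _ + _; apply. Qed.

Lemma hderM n r s : delta n (r * s) = \sum_(i < n.+1) delta i r * delta (n - i)%N s.
Proof. by case: hD => _ _; apply. Qed.

Lemma hder0 n : delta n 0 = 0.
Proof.
have [hDD _ _] := hD.
by apply/(addrI (delta n 0)); rewrite -hDD !addr0.
Qed.

Lemma hderB n x y : delta n (x - y) = delta n x - delta n y.
Proof.
have [hDD _ _] := hD.
suff hDN : delta n (- y) = - delta n y by rewrite hDD hDN.
by apply/(addrI (delta n y)); rewrite -hDD !subrr hder0.
Qed.

Definition preim_upto n (I : R -> Prop) : R -> Prop :=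
  fun x => forall i, (i <= n)%N -> I (delta i x).

Lemma preim_upto0 I x : preim_upto 0 I x <-> I x.
Proof.
rewrite /preim_upto; split=> [/(_ 0%N isT) | Ix i]; first by rewrite hder_id.
by rewrite leqn0 => /eqP->; rewrite hder_id.
Qed.

Lemma right_ideal_preim_upto n I : is_right_ideal I -> is_right_ideal (preim_upto n I).
Proof.
move=> rI; have [I0 IB IM] := rI; split; rewrite /preim_upto.
- by move=> i _; rewrite hder0.
- by move=> x y Ix Iy i le_in; rewrite hderB; apply: IB; [apply: Ix | apply: Iy].
- move=> x r Ix i le_in; rewrite hderM; apply: right_ideal_sum => // j.
  by apply/IM/Ix; rewrite (leq_trans _ le_in) // -ltnS.
Qed.

Lemma preim_upto_colon n I r s : is_right_ideal I -> I r ->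
  preim_upto n (fun t => forall j, (j <= n.+1)%N -> I (delta j r * t)) s ->
  preim_upto n.+1 I (r * s).
Proof.
move=> rI Ir Ms i le_in1; have [_ _ IM] := rI.
rewrite hderM; apply: right_ideal_sum => // -[[|j] lt_ji] /=.
  by rewrite hder_id; apply: IM.
apply: Ms; last by rewrite (leq_trans _ le_in1).
by rewrite leq_subLR (leq_trans le_in1) // addSn ltnS leq_addl.
Qed.

Lemma gabriel_preim_upto (F : (R -> Prop) -> Prop) n I :
  gabriel_filter F -> F I -> F (preim_upto n I).
Proof.
move=> gF; elim: n I => [|n IHn] I FI.
  by apply: gabriel_ext FI _ => x; rewrite preim_upto0.
have rI := gabriel_ideal gF FI; have [_ _ _ gF2] := gF.
apply: (gF2 I) => // [|r Ir]; first exact: right_ideal_preim_upto.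
have FC : F (fun t => forall j, (j <= n.+1)%N -> I (delta j r * t)).
  by apply: (gabriel_bigcap gF) => j _; apply: (gabriel_colon gF).
apply: (gabriel_sup gF (IHn _ FC)).
  exact/right_ideal_colon/right_ideal_preim_upto.
by move=> s; apply: preim_upto_colon.
Qed.

End HigherDerivation.

Theorem corollary3p2 (R : pzRingType) (F : (R -> Prop) -> Prop)
  (delta : nat -> R -> R) :
  gabriel_filter F -> higher_derivation delta ->
  forall I, F I -> forall n : nat,
    exists J, F J /\ (forall i : nat, (i <= n)%N -> forall x, J x -> I (delta i x)).
Proof.
move=> gF hD I FI n; exists (preim_upto delta n I).
by split=> [|i le_in x Jx]; [exact: gabriel_preim_upto | exact: Jx].
Qed.
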